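(* (Pasting Lemma in $\mathsf{PsTop}$.) Let $X$ be a pseudotopological space and let $\{X_j\}_{j\in J}$ be a cover of $X$ such that either (1) every $X_j$ is open in the topological space $RX$, or (2) every $X_j$ is closed in $RX$ and the family $\{X_j\}_{j\in J}$ is locally finite in $RX$ (every point has a neighbourhood in $RX$ meeting only finitely many $X_j$). Let $Y$ be a pseudotopological space and $f\colon X\to Y$ a function such that each restriction $f_j=f|_{X_j}\colon X_j\to Y$ is continuous, where $X_j$ carries the subspace pseudotopology. Then $f$ is continuous.
   Context: For a set $X$, $U(X)$ denotes the set of ultrafilters on $X$ and $\dot x$ the principal ultrafilter at $x\in X$. For a map $f\colon X\to Y$ and a filter $\mathscr F$ on $X$, $f_*\mathscr F=\{S\subset Y: f^{-1}(S)\in\mathscr F\}$ (an ultrafilter if $\mathscr F$ is). A pseudotopological structure on a set $X$ is a relation $u\subset U(X)\times X$ with $(\dot x,x)\in u$ for all $x\in X$; one writes $\mathscr U\to x$ for $(\mathscr U,x)\in u$, and $(X,u)$ is called a pseudotopological space. A map $f$ between pseudotopological spaces is continuous if $\mathscr U\to x$ implies $f_*\mathscr U\to f(x)$. For a subset $A\subset X$ with inclusion $i$, the subspace pseudotopology on $A$ is: $\mathscr U\to a$ in $A$ iff $i_*\mathscr U\to a$ in $X$. For a pseudotopological space $X$, $RX$ is the topological space with the same underlying set in which a set $S$ is open iff $S\in\mathscr U$ whenever $\mathscr U\to x$ with $x\in S$. *)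

From Stdlib Require Import List.


Definition setfam (X : Type) := (X -> Prop) -> Prop.

Definition is_filter {X : Type} (F : setfam X) : Prop :=
  F (fun _ => True) /\
  (forall S T, F S -> F T -> F (fun x => S x /\ T x)) /\
  (forall S T : X -> Prop, (forall x, S x -> T x) -> F S -> F T) /\
  ~ F (fun _ => False).

Definition is_ultrafilter {X : Type} (F : setfam X) : Prop :=
  is_filter F /\ forall S, F S \/ F (fun x => ~ S x).

Definition principal {X : Type} (x : X) : setfam X := fun S => S x.

Definition pushf {X Y : Type} (f : X -> Y) (F : setfam X) : setfam Y :=
  fun S => F (fun x => S (f x)).

(* A pseudotopological space: a relation between ultrafilters and points
   containing every (x-dot, x). The relation [conv] is only ever consulted
   on ultrafilters. *)
Record PsTop := {
  pt_carrier :> Type;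
  conv : setfam pt_carrier -> pt_carrier -> Prop;
  conv_principal : forall x, conv (principal x) x
}.

Definition ps_continuous (X Y : PsTop) (f : X -> Y) : Prop :=
  forall (U : setfam X) (x : X), is_ultrafilter U -> conv X U x ->
    conv Y (pushf f U) (f x).

Definition sub_conv (X : PsTop) (A : X -> Prop)
  (U : setfam {x : X | A x}) (a : {x : X | A x}) : Prop :=
  conv X (pushf (@proj1_sig X A) U) (proj1_sig a).

Lemma sub_conv_principal (X : PsTop) (A : X -> Prop) (a : {x : X | A x}) :
  sub_conv X A (principal a) a.
Proof. exact (conv_principal X (proj1_sig a)). Qed.

Definition subspace (X : PsTop) (A : X -> Prop) : PsTop :=
  {| pt_carrier := {x : X | A x};
     conv := sub_conv X A;
     conv_principal := sub_conv_principal X A |}.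

Definition restrict (X Y : PsTop) (f : X -> Y) (A : X -> Prop) :
  subspace X A -> Y := fun a => f (proj1_sig a).

Definition RX_open (X : PsTop) (S : X -> Prop) : Prop :=
  forall (U : setfam X) (x : X), is_ultrafilter U -> conv X U x -> S x -> U S.

Definition RX_closed (X : PsTop) (S : X -> Prop) : Prop :=
  RX_open X (fun x => ~ S x).

Definition RX_nbhd (X : PsTop) (x : X) (N : X -> Prop) : Prop :=
  exists O : X -> Prop, RX_open X O /\ O x /\ (forall y, O y -> N y).

Definition RX_locally_finite (X : PsTop) (J : Type) (Xs : J -> X -> Prop) : Prop :=
  forall x : X, exists N : X -> Prop, RX_nbhd X x N /\
    exists l : list J, forall j, (exists y, N y /\ Xs j y) -> In j l.

(** If an ultrafilter [U] converges to [x], then in case (1) it contains every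
    piece [X_j] through [x], since [X_j] is open in [RX]; in case (2) it contains
    some piece through [x]: otherwise it would contain the complement of every
    piece (the complements of pieces missing [x] are open in [RX]), hence the
    intersection of a neighbourhood of [x] with the complements of the finitely
    many pieces meeting it, which is empty because the pieces cover [X].
    Tracing [U] on such a piece [X_j] gives an ultrafilter converging to [x] in
    the subspace [X_j] whose images under the inclusion and under [f_j] are [U]
    and [f_* U]; continuity of [f_j] then gives [f_* U -> f x]. *)

From Stdlib Require Import List Classical FunctionalExtensionality PropExtensionality ProofIrrelevance.

Section Ultrafilter.

Variables (X : Type) (U : setfam X).
Hypothesis U_ultra : is_ultrafilter U.

Lemma ultrafilter_mono (S T : X -> Prop) : (forall x, S x -> T x) -> U S -> U T.
Proof. exact (proj1 (proj2 (proj2 (proj1 U_ultra))) S T). Qed.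

Lemma ultrafilter_inter (S T : X -> Prop) : U S -> U T -> U (fun x => S x /\ T x).
Proof. exact (proj1 (proj2 (proj1 U_ultra)) S T). Qed.

Lemma ultrafilter_empty (S : X -> Prop) : (forall x, ~ S x) -> ~ U S.
Proof.
  intros HS US; apply (proj2 (proj2 (proj2 (proj1 U_ultra)))).
  exact (ultrafilter_mono S _ HS US).
Qed.

Lemma ultrafilter_compl (S : X -> Prop) : ~ U S -> U (fun x => ~ S x).
Proof. now destruct (proj2 U_ultra S). Qed.

Lemma ultrafilter_list_inter (J : Type) (l : list J) (P : J -> X -> Prop) :
  (forall j, In j l -> U (P j)) -> U (fun x => forall j, In j l -> P j x).
Proof.
  induction l as [|j0 l IH]; intros Hl.
  - apply (ultrafilter_mono (fun _ => True)); [now intros x _ j []|].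
    exact (proj1 (proj1 U_ultra)).
  - apply (ultrafilter_mono (fun x => P j0 x /\ forall j, In j l -> P j x)).
    + intros x [Hx0 Hx] j [<-|Hj]; auto.
    + apply ultrafilter_inter; [apply Hl; left; reflexivity|].
      apply IH; intros j Hj; apply Hl; right; exact Hj.
Qed.

Lemma ultrafilter_impl_eq (A T : X -> Prop) :
  U A -> U (fun x => A x -> T x) = U T.
Proof.
  intros UA; apply propositional_extensionality; split; intros H.
  - apply (ultrafilter_mono (fun x => A x /\ (A x -> T x))); [firstorder|].
    exact (ultrafilter_inter _ _ UA H).
  - exact (ultrafilter_mono T _ (fun x Tx _ => Tx) H).
Qed.

End Ultrafilter.

Definition trace {X : Type} (A : X -> Prop) (U : setfam X) : setfam {x : X | A x} :=
  fun S => U (fun y => forall h : A y, S (exist _ y h)).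

Section Trace.

Variables (X : Type) (A : X -> Prop) (U : setfam X).
Hypotheses (U_ultra : is_ultrafilter U) (UA : U A).

Lemma trace_ultrafilter : is_ultrafilter (trace A U).
Proof.
  unfold trace; split; [split; [|split; [|split]]|].
  - apply (ultrafilter_mono X U U_ultra A); [trivial|exact UA].
  - intros S T US UT.
    apply (ultrafilter_mono X U U_ultra _ _ (fun y H h => conj (proj1 H h) (proj2 H h))).
    exact (ultrafilter_inter X U U_ultra _ _ US UT).
  - intros S T HST US.
    exact (ultrafilter_mono X U U_ultra _ _ (fun y H h => HST _ (H h)) US).
  - intros Uempty; apply (ultrafilter_empty X U U_ultra (fun y => A y /\ (A y -> False))).
    + intros y [Ay Hy]; exact (Hy Ay).
    + exact (ultrafilter_inter X U U_ultra _ _ UA Uempty).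
  - intros S; destruct (proj2 U_ultra (fun y => forall h : A y, S (exist _ y h))) as [H|H];
      [left; exact H|right].
    refine (ultrafilter_mono X U U_ultra _ _ _ H).
    intros y Hy h HS; apply Hy; intros h'.
    rewrite (proof_irrelevance _ h' h); exact HS.
Qed.

Lemma pushf_val_trace : pushf (@proj1_sig X A) (trace A U) = U.
Proof.
  apply functional_extensionality; intros T.
  exact (ultrafilter_impl_eq X U U_ultra A T UA).
Qed.

End Trace.

Definition conv_local (X : PsTop) (J : Type) (Xs : J -> X -> Prop) : Prop :=
  forall (U : setfam X) (x : X), is_ultrafilter U -> conv X U x ->
    exists j, Xs j x /\ U (Xs j).

Lemma ps_continuous_pasting (X Y : PsTop) (J : Type) (Xs : J -> X -> Prop) (f : X -> Y) :
  conv_local X J Xs ->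
  (forall j, ps_continuous (subspace X (Xs j)) Y (restrict X Y f (Xs j))) ->
  ps_continuous X Y f.
Proof.
  intros Hloc Hf U x U_ultra Ux.
  destruct (Hloc U x U_ultra Ux) as [j [Hjx UXj]].
  pose proof (pushf_val_trace X (Xs j) U U_ultra UXj) as Hval.
  assert (Htrace : conv (subspace X (Xs j)) (trace (Xs j) U) (exist _ x Hjx)).
  { simpl; unfold sub_conv; rewrite Hval; exact Ux. }
  pose proof (Hf j _ _ (trace_ultrafilter X (Xs j) U U_ultra UXj) Htrace) as Hfj.
  change (conv Y (pushf f (pushf (@proj1_sig X (Xs j)) (trace (Xs j) U))) (f x)) in Hfj.
  rewrite Hval in Hfj; exact Hfj.
Qed.

Lemma open_cover_conv_local (X : PsTop) (J : Type) (Xs : J -> X -> Prop) :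
  (forall x, exists j, Xs j x) -> (forall j, RX_open X (Xs j)) -> conv_local X J Xs.
Proof.
  intros Hcov Hopen U x U_ultra Ux.
  destruct (Hcov x) as [j Hjx].
  exists j; split; [exact Hjx|exact (Hopen j U x U_ultra Ux Hjx)].
Qed.

Lemma locally_finite_closed_cover_conv_local (X : PsTop) (J : Type) (Xs : J -> X -> Prop) :
  (forall x, exists j, Xs j x) -> (forall j, RX_closed X (Xs j)) ->
  RX_locally_finite X J Xs -> conv_local X J Xs.
Proof.
  intros Hcov Hclosed Hlf U x U_ultra Ux.
  apply NNPP; intros Hnone.
  assert (Hcompl : forall j, U (fun y => ~ Xs j y)).
  { intros j; destruct (classic (Xs j x)) as [Hjx|Hjx].
    - apply (ultrafilter_compl X U U_ultra); intros UXj; apply Hnone; exists j; auto.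
    - exact (Hclosed j U x U_ultra Ux Hjx). }
  destruct (Hlf x) as [N [[O [HO [HOx HON]]] [l Hl]]].
  apply (ultrafilter_empty X U U_ultra (fun y => O y /\ forall j, In j l -> ~ Xs j y)).
  - intros y [HOy Hy]; destruct (Hcov y) as [j Hjy].
    apply (Hy j); [apply Hl; exists y; split; auto|exact Hjy].
  - apply ultrafilter_inter; [exact U_ultra|exact (HO U x U_ultra Ux HOx)|].
    apply ultrafilter_list_inter; [exact U_ultra|intros j _; exact (Hcompl j)].
Qed.

Theorem lemma3p2 (X Y : PsTop) (J : Type) (Xs : J -> X -> Prop) (f : X -> Y) :
  (forall x : X, exists j, Xs j x) ->
  ((forall j, RX_open X (Xs j)) \/
   ((forall j, RX_closed X (Xs j)) /\ RX_locally_finite X J Xs)) ->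
  (forall j, ps_continuous (subspace X (Xs j)) Y (restrict X Y f (Xs j))) ->
  ps_continuous X Y f.
Proof.
  intros Hcov [Hopen|[Hclosed Hlf]]; apply ps_continuous_pasting.
  - exact (open_cover_conv_local X J Xs Hcov Hopen).
  - exact (locally_finite_closed_cover_conv_local X J Xs Hcov Hclosed Hlf).
Qed.
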